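(* Consider the strong recursive skeletonization procedure described in the context, applied to $K$, with arbitrary choices of the partitions $\mathcal{B}_m=\mathcal{R}_m\cup\mathcal{S}_m$ and interpolation matrices at each step (assuming the pivot blocks are invertible). Let $\ell\ge1$ and let $r$ be the number of the last box at level $\ell$, and let $A=Z(K;\mathcal{B}_1,\dots,\mathcal{B}_r)$. For every box $j>r$, let $\mathcal{B}_j$ be the set of DOFs active in $A$ whose points lie in box $j$, and $\mathcal{F}_j$ the set of DOFs active in $A$ that lie neither in box $j$ nor in any neighbor of box $j$ at the level of box $j$. Then $$A_{\mathcal{F}_j\mathcal{B}_j}=K_{\mathcal{F}_j\mathcal{B}_j}\quad\text{and}\quad A_{\mathcal{B}_j\mathcal{F}_j}=K_{\mathcal{B}_j\mathcal{F}_j}\qquad\text{for all } j>r.$$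
   Context: Let $K\in\mathbb{C}^{N\times N}$ have rows and columns indexed by $[N]=\{1,\dots,N\}$; each index (a ''DOF'') $i$ is associated with a point $x_i\in\mathbb{R}^d$, $d\in\{2,3\}$, in a cube $\Omega$. For index sets $\mathcal{I},\mathcal{J}$, $A_{\mathcal{I}\mathcal{J}}$ is the corresponding submatrix. A uniformly refined quadtree ($d=2$) or octree ($d=3$) decomposition of $\Omega$ is given, with levels numbered from the finest $\ell=1$ (leaves) to the root $\ell=L$; boxes at level $\ell$ have sidelength $D_\ell=2^{\ell-1}D_1$. Two distinct boxes at the same level are neighbors if they are adjacent. Boxes are numbered $1,2,\dots$ along a fixed bottom-up level-by-level traversal (every box of level $\ell$ precedes every box of level $\ell+1$). Procedure: maintain a matrix $A$ (initially $A=K$) and a set of active DOFs (initially all of $[N]$). Boxes are processed in order. When box $m$, at level $\ell$, is processed: $\mathcal{B}_m$ is the set of active DOFs whose points lie in box $m$ (for $\ell>1$ this is the union of the skeleton sets $\mathcal{S}_c$ of the children $c$ of box $m$); $\mathcal{N}_m$ is the set of active DOFs lying in the level-$\ell$ neighbors of box $m$; $\mathcal{F}_m$ is the set of remaining active DOFs (far field). A partition $\mathcal{B}_m=\mathcal{R}_m\cup\mathcal{S}_m$ (redundant/skeleton) and a matrix $T$ of size $|\mathcal{S}_m|\times|\mathcal{R}_m|$ are chosen (via an interpolative decomposition). Writing $R,S,N$ for $\mathcal{R}_m,\mathcal{S}_m,\mathcal{N}_m$, set $X_{RR}=A_{RR}-T^*A_{SR}-A_{RS}T+T^*A_{SS}T$,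 $X_{RS}=A_{RS}-T^*A_{SS}$, $X_{SR}=A_{SR}-A_{SS}T$, $X_{RN}=A_{RN}-T^*A_{SN}$, $X_{NR}=A_{NR}-A_{NS}T$, and, with $X_{RR}$ invertible, $X_{SS}=A_{SS}-X_{SR}X_{RR}^{-1}X_{RS}$, $X_{SN}=A_{SN}-X_{SR}X_{RR}^{-1}X_{RN}$, $X_{NS}=A_{NS}-X_{NR}X_{RR}^{-1}X_{RS}$, $X_{NN}=A_{NN}-X_{NR}X_{RR}^{-1}X_{RN}$. The strongly skeletonized matrix $Z(A;\mathcal{B}_m)$ equals $A$ except that its $(R,R)$ block is $X_{RR}$, all other entries in rows or columns indexed by $R$ are zero, and its $(S,S),(S,N),(N,S),(N,N)$ blocks are $X_{SS},X_{SN},X_{NS},X_{NN}$; all other entries are unchanged. Then $A$ is replaced by $Z(A;\mathcal{B}_m)$ and the DOFs of $\mathcal{R}_m$ become inactive. $Z(K;\mathcal{B}_1,\dots,\mathcal{B}_r)$ denotes the matrix obtained after processing boxes $1,\dots,r$ in order. *)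

From HB Require Import structures.
From mathcomp Require Import all_boot all_order all_algebra.
Set Implicit Arguments. Unset Strict Implicit. Unset Printing Implicit Defensive.
Import Order.TTheory GRing.Theory Num.Theory.
Local Open Scope ring_scope.

(* Strong recursive skeletonization on a uniform quadtree/octree.
   - C : the scalar field (any numClosedFieldType, e.g. complex numbers),
     with conjugation x^* used for T^*.
   - DOFs are 'I_N; each DOF i lies in the leaf box with integer coordinates
     [leaf i k] (k < d), leaves forming a 2^(L-1) x ... x 2^(L-1) grid.
   - The box at level l (1 = leaves, L = root) containing DOF i has
     coordinates [leaf i k %/ 2^(l-1)]; boxes at level l are indexed by
     {ffun 'I_d -> 'I_(2^(L-l))}. *)

Section Skel.
Variables (C : numClosedFieldType) (N d L : nat).
Variable leaf : 'I_N -> 'I_d -> 'I_(2 ^ (L - 1)).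

Definition box (l : nat) := {ffun 'I_d -> 'I_(2 ^ (L - l))}.

Definition boxcoord (l : nat) (i : 'I_N) (k : 'I_d) : nat :=
  (leaf i k %/ 2 ^ (l - 1))%N.

Definition inbox (l : nat) (c : box l) (i : 'I_N) : bool :=
  [forall k, boxcoord l i k == nat_of_ord (c k)].

Definition in_nbr (l : nat) (c : box l) (i : 'I_N) : bool :=
  ~~ inbox c i &&
  [forall k, (boxcoord l i k <= (c k).+1)%N && (nat_of_ord (c k) <= (boxcoord l i k).+1)%N].

Definition state := ('M[C]_N * {set 'I_N})%type.

Section Z.
Variables (A : 'M[C]_N) (R S Nb : {set 'I_N}) (T : 'I_N -> 'I_N -> C).

(* (A_{.R} - A_{.S} T) : gives X_SR and X_NR *)
Definition Xcol (i r : 'I_N) : C := A i r - \sum_(s in S) A i s * T s r.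
(* (A_{R.} - T^* A_{S.}) : gives X_RS and X_RN *)
Definition Xrow (r j : 'I_N) : C := A r j - \sum_(s in S) (T s r)^* * A s j.
Definition XRR (r r' : 'I_N) : C :=
  A r r' - \sum_(s in S) (T s r)^* * A s r' - \sum_(s in S) A r s * T s r'
  + \sum_(s in S) \sum_(s' in S) (T s r)^* * A s s' * T s' r'.

Definition pivot : 'M[C]_#|R| :=
  \matrix_(a, b) XRR (enum_val a) (enum_val b).

Definition schur (i j : 'I_N) : C :=
  \sum_(a < #|R|) \sum_(b < #|R|)
     Xcol i (enum_val a) * invmx pivot a b * Xrow (enum_val b) j.

Definition Zskel : 'M[C]_N :=
  \matrix_(i, j)
    if (i \in R) && (j \in R) then XRR i j
    else if (i \in R) || (j \in R) then 0
    else if (i \in S :|: Nb) && (j \in S :|: Nb) then A i j - schur i j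
    else A i j.
End Z.

Definition skel_step (l : nat) (c : box l) (st st' : state) : Prop :=
  let B := [set i in st.2 | inbox c i] in
  let Nb := [set i in st.2 | in_nbr c i] in
  exists (R : {set 'I_N}) (T : 'I_N -> 'I_N -> C),
    [/\ R \subset B,
        pivot st.1 R (B :\: R) T \in unitmx &
        st' = (Zskel st.1 R (B :\: R) Nb T, st.2 :\: R)].

Inductive skel_run (l : nat) : seq (box l) -> state -> state -> Prop :=
| skel_run_nil st : skel_run [::] st st
| skel_run_cons c s st st' st'' :
    skel_step c st st' -> skel_run s st' st'' -> skel_run (c :: s) st st''.

Inductive skel_upto (K : 'M[C]_N) (order : forall l, seq (box l)) :
    nat -> state -> Prop :=
| skel_upto0 : skel_upto K order 0 (K, setT)
| skel_uptoS l st st' :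
    skel_upto K order l st -> skel_run (order l.+1) st st' ->
    skel_upto K order l.+1 st'.

End Skel.

(* Processing a box c of level l only modifies entries whose row and column
   both lie in c or in a neighbor of c; such DOFs have level-l box coordinates
   within 2 of each other.  Hence, after all levels up to lev, every entry that
   still differs from K joins two DOFs that are within 2 at some level
   l' <= lev.  Halving coordinates at least once brings them within 1 at any
   level l > lev, so a DOF in box c of level l and one in the far field of c
   cannot be joined by a modified entry. *)

From HB Require Import structures.
From mathcomp Require Import all_boot all_order all_algebra.
From mathcomp Require Import zify.
Import Order.TTheory GRing.Theory Num.Theory.
Local Open Scope ring_scope.
Set Implicit Arguments.

Lemma leq_div_addr1 (x y m : nat) :
  (0 < m)%N -> (x <= y + m)%N -> (x %/ m <= y %/ m + 1)%N.
Proof.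
move=> m_gt0 le_xym.
by have := leq_div2r m le_xym; rewrite divnDr ?dvdnn // divnn m_gt0.
Qed.

Section Skeletonization.
Variables (C : numClosedFieldType) (N d L : nat).
Variable leaf : 'I_N -> 'I_d -> 'I_(2 ^ (L - 1)).

Definition close_at (l : nat) (i j : 'I_N) : bool :=
  [forall k, (boxcoord leaf l i k <= boxcoord leaf l j k + 2)%N &&
             (boxcoord leaf l j k <= boxcoord leaf l i k + 2)%N].

Lemma close_atC l i j : close_at l i j = close_at l j i.
Proof.
by apply/forallP/forallP => h k; rewrite andbC; apply: h.
Qed.

Lemma boxcoord_near l (c : box d L l) i :
  inbox leaf c i || in_nbr leaf c i ->
  forall k, (boxcoord leaf l i k <= (c k).+1)%N &&
            (nat_of_ord (c k) <= (boxcoord leaf l i k).+1)%N.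
Proof.
case/orP => [/forallP inc k | /andP[_ /forallP]] //.
by rewrite (eqP (inc k)) leqnSn.
Qed.

Lemma close_at_near l (c : box d L l) i j :
  inbox leaf c i || in_nbr leaf c i -> inbox leaf c j || in_nbr leaf c j ->
  close_at l i j.
Proof.
move=> /boxcoord_near near_i /boxcoord_near near_j; apply/forallP => k.
by move: (near_i k) (near_j k) => /andP[? ?] /andP[? ?]; apply/andP; lia.
Qed.

Lemma boxcoord_coarsen {l' l} i k : (0 < l')%N -> (l' <= l)%N ->
  boxcoord leaf l i k = (boxcoord leaf l' i k %/ 2 ^ (l - l'))%N.
Proof.
by move=> l'_gt0 le_l'l; rewrite /boxcoord -divnMA -expnD; congr (_ %/ 2 ^ _)%N; lia.
Qed.

(* One coarsening halves the coordinates, turning distance 2 into distance 1. *)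
Lemma close_at_coarsen {l' l i j} k : (0 < l')%N -> (l' < l)%N -> close_at l' i j ->
  (boxcoord leaf l i k <= boxcoord leaf l j k + 1)%N /\
  (boxcoord leaf l j k <= boxcoord leaf l i k + 1)%N.
Proof.
move=> l'_gt0 lt_l'l /forallP /(_ k) /andP[le_ij le_ji].
have two_le : (2 <= 2 ^ (l - l'))%N.
  by rewrite -[X in (X <= _)%N]expn1 leq_pexp2l // subn_gt0.
have le_l'l := ltnW lt_l'l.
rewrite !(boxcoord_coarsen _ _ l'_gt0 le_l'l).
by split; apply: leq_div_addr1; rewrite ?expn_gt0 //; lia.
Qed.

Lemma far_not_close_at {l' l} {c : box d L l} {i j} :
  (0 < l')%N -> (l' < l)%N -> inbox leaf c j ->
  ~~ inbox leaf c i -> ~~ in_nbr leaf c i -> ~~ close_at l' i j.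
Proof.
move=> l'_gt0 lt_l'l /forallP j_in_c i_notin_c i_not_nbr.
apply: contra i_not_nbr => close_ij; rewrite /in_nbr i_notin_c.
apply/forallP => k; rewrite -(eqP (j_in_c k)).
by have [? ?] := close_at_coarsen k l'_gt0 lt_l'l close_ij; apply/andP; lia.
Qed.

Definition modified_only_close (K : 'M[C]_N) (lev : nat) (st : state C N) :=
  forall i j, i \in st.2 -> j \in st.2 -> st.1 i j != K i j ->
    exists2 l', (0 < l' <= lev)%N & close_at l' i j.

Lemma modified_only_close_mono K lev lev' st : (lev <= lev')%N ->
  modified_only_close K lev st -> modified_only_close K lev' st.
Proof.
move=> le_lev inv i j i_act j_act /(inv i j i_act j_act)[l' /andP[? ?] ?].
by exists l'; rewrite // (leq_trans _ le_lev) ?andbT.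
Qed.

(* Entries in rows or columns of R are modified too, but R becomes inactive. *)
Lemma skel_step_modified_only_close K lev l (c : box d L l) st st' :
  (0 < l <= lev)%N -> skel_step leaf c st st' ->
  modified_only_close K lev st -> modified_only_close K lev st'.
Proof.
move=> l_range [R [T [_ _ ->]]] inv i j /=.
rewrite !inE => /andP[i_notin_R i_act] /andP[j_notin_R j_act].
rewrite mxE (negbTE i_notin_R) (negbTE j_notin_R) /=.
case: ifP => [/andP[i_near j_near] _ | _]; last exact: inv.
exists l => //; apply: (@close_at_near l c); [move: i_near | move: j_near];
  by rewrite !inE => /orP[/and3P[_ _ ->] | /andP[_ ->]]; rewrite ?orbT.
Qed.

Lemma skel_run_modified_only_close K lev l (s : seq (box d L l)) st st' :
  (0 < l <= lev)%N -> skel_run leaf s st st' ->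
  modified_only_close K lev st -> modified_only_close K lev st'.
Proof.
move=> l_range; elim=> // c s0 st1 st2 st3 step _ IH inv.
by apply: IH; apply: skel_step_modified_only_close l_range step inv.
Qed.

Lemma skel_upto_modified_only_close K order lev st :
  skel_upto leaf K order lev st -> modified_only_close K lev st.
Proof.
elim=> [|l st0 st1 _ IH run]; first by move=> i j _ _; rewrite eqxx.
apply: (skel_run_modified_only_close _ run); first by rewrite ltn0Sn leqnn.
exact: modified_only_close_mono (leqnSn l) IH.
Qed.

Lemma modified_only_close_eq K lev (st : state C N) i j :
  modified_only_close K lev st -> i \in st.2 -> j \in st.2 ->
  (forall l', (0 < l' <= lev)%N -> ~~ close_at l' i j) -> st.1 i j = K i j.
Proof.
move=> inv i_act j_act far; apply/eqP/negP => /negP/(inv i j i_act j_act)[l' range].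
by apply/negP/far.
Qed.

End Skeletonization.

Theorem corollary3p2 (C : numClosedFieldType) (N d L : nat)
  (leaf : 'I_N -> 'I_d -> 'I_(2 ^ (L - 1)))
  (K : 'M[C]_N)
  (order : forall l : nat, seq (box d L l))
  (hd : d = 2%N \/ d = 3%N)
  (horder : forall l : nat, (1 <= l <= L)%N -> perm_eq (order l) (enum (box d L l)))
  (lev : nat) (hlev : (1 <= lev <= L)%N)
  (A : 'M[C]_N) (act : {set 'I_N})
  (hrun : skel_upto leaf K order lev (A, act)) :
  forall (l : nat) (c : box d L l), (lev < l <= L)%N ->
  let Bj := [set i in act | inbox leaf c i] in
  let Fj := [set i in act | ~~ inbox leaf c i && ~~ in_nbr leaf c i] in
  forall i j, i \in Fj -> j \in Bj -> A i j = K i j /\ A j i = K j i.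
Proof.
move=> l c /andP[lt_lev_l _] Bj Fj i j.
rewrite !inE => /andP[i_act /andP[i_notin_c i_not_nbr]] /andP[j_act j_in_c].
have inv := skel_upto_modified_only_close hrun.
have far l' : (0 < l' <= lev)%N -> ~~ close_at L leaf l' i j.
  case/andP=> l'_gt0 le_l'_lev.
  have lt_l'l := leq_ltn_trans le_l'_lev lt_lev_l.
  exact: far_not_close_at l'_gt0 lt_l'l j_in_c i_notin_c i_not_nbr.
split; apply: (modified_only_close_eq inv) => // l' /far.
by rewrite close_atC.
Qed.
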